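(* Let $x_j$ be a real random variable and $\boldsymbol{x}_C$ a random vector independent of $x_j$. If $f(x_j,\boldsymbol{x}_C)=g(x_j)h(\boldsymbol{x}_C)$, where $g$ is a function of $x_j$ only and $h$ is a function of $\boldsymbol{x}_C$ only, then $$\mathbb{E}_{\boldsymbol{x}_C}\big[I_{ice}(x_j;\boldsymbol{x}_C)\big]\ge I_{pdp}(x_j).$$ Moreover, equality holds if $h$ is a nonnegative function.
   Context: Inputs are $\boldsymbol{x}=(x_1,\dots,x_m)$ with independent components; $C=\{1,\dots,m\}\setminus\{j\}$ and $\boldsymbol{x}_C$ denotes the vector of the inputs with indices in $C$. $\mathbb{E}_{z}$ and $\mathbb{V}_{z}$ denote expectation and variance taken with respect to the random variable $z$ only, the other arguments being held fixed. For a fixed value of $\boldsymbol{x}_C$, the ICE importance is $I_{ice}(x_j;\boldsymbol{x}_C)=\sqrt{\mathbb{V}_{x_j}[f(x_j,\boldsymbol{x}_C)]}$. The PDP importance is $I_{pdp}(x_j)=\sqrt{\mathbb{V}_{x_j}\big[\mathbb{E}_{\boldsymbol{x}_C}[f(x_j,\boldsymbol{x}_C)]\big]}$. All expectations and variances involved are assumed to exist and be finite. *)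

From HB Require Import structures.
From mathcomp Require Import all_boot all_order all_algebra.
From mathcomp Require Import all_classical all_reals all_analysis.
Set Implicit Arguments. Unset Strict Implicit. Unset Printing Implicit Defensive.
Import Order.TTheory GRing.Theory Num.Theory.
Local Open Scope ring_scope.

Definition Ex d (T : measurableType d) (R : realType) (P : probability T R)
  (F : T -> R) : R := fine (\int[P]_x (F x)%:E)%E.

Definition Var d (T : measurableType d) (R : realType) (P : probability T R)
  (F : T -> R) : R := Ex P (fun x => (F x - Ex P F) ^+ 2).

(* ICE importance: mu = law of x_j, c = fixed value of x_C. *)
Definition I_ice d (TC : measurableType d) (R : realType) (mu : probability R R)
  (f : R -> TC -> R) (c : TC) : R := Num.sqrt (Var mu (fun a => f a c)).

(* PDP importance: mu = law of x_j, nu = law of x_C. *)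
Definition I_pdp d (TC : measurableType d) (R : realType) (mu : probability R R)
  (nu : probability TC R) (f : R -> TC -> R) : R :=
  Num.sqrt (Var mu (fun a => Ex nu (fun c => f a c))).

From HB Require Import structures.
From mathcomp Require Import all_boot all_order all_algebra.
From mathcomp Require Import all_classical all_reals all_analysis.
Import Order.TTheory GRing.Theory Num.Theory.
Local Open Scope ring_scope.

(* For a product [f a c = g a * h c], the ICE curve at [c] is [g] rescaled by
   [h c] and the PDP curve is [g] rescaled by [E h], so their standard
   deviations are [|h c| * sd g] and [|E h| * sd g].  The claim thus reduces to
   Jensen's inequality [|E h| <= E |h|], an equality when [h >= 0]. *)

Lemma ge0_fineZl (R : realType) (k : R) (x : \bar R) : 0 <= k ->
  fine (k%:E * x)%E = k * fine x.
Proof.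
move=> k0; case: x => [r| |] //=; have [->|kn0] := eqVneq k 0;
  rewrite ?mul0e ?mul0r //; have kp : 0 < k by rewrite lt_neqAle eq_sym kn0.
- by rewrite gt0_muley ?lte_fin //= mulr0.
- by rewrite gt0_muleNy ?lte_fin //= mulr0.
Qed.

Section expectation.
Context d (T : measurableType d) (R : realType) (P : probability T R).
Implicit Types (F : T -> R) (k : R).

Lemma ge0_ExZl F k : measurable_fun setT F -> (forall x, 0 <= F x) -> 0 <= k ->
  Ex P (fun x => k * F x) = k * Ex P F.
Proof.
move=> mF F0 k0; rewrite /Ex.
under eq_integral do rewrite EFinM.
rewrite ge0_integralZl_EFin ?ge0_fineZl //.
- by move=> x _; rewrite lee_fin.
- exact/measurable_realfun.measurable_EFinP.
Qed.

Lemma ExZl F k : P.-integrable setT (EFin \o F) ->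
  Ex P (fun x => k * F x) = k * Ex P F.
Proof.
move=> iF; rewrite /Ex.
under eq_integral do rewrite EFinM.
rewrite integralZl //.
by have := integrable_fin_num measurableT iF; case: (\int[P]_x _)%E.
Qed.

Lemma Ex_ge0 F : (forall x, 0 <= F x) -> 0 <= Ex P F.
Proof. by move=> F0; apply/fine_ge0/integral_ge0 => x _; rewrite lee_fin. Qed.

Lemma le_abs_Ex F : P.-integrable setT (EFin \o F) ->
  `|Ex P F| <= Ex P (fun x => `|F x|).
Proof.
move=> iF; have iF_fin := integrable_fin_num measurableT iF.
have iabsF_fin := integrable_fin_num measurableT (integrable_abse iF).
rewrite /Ex -fine_abse //; apply: fine_le.
- by rewrite abse_fin_num.
- by under eq_integral do rewrite -abse_EFin.
under [X in (_ <= X)%E]eq_integral do rewrite -abse_EFin.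
exact/le_abse_integral/(measurable_int _ iF).
Qed.

(* [F] need not be square integrable: [Var] is the [fine] of a nonnegative
   integral, and [ge0_fineZl] also covers the junk value [fine +oo = 0]. *)
Lemma VarZr F k : P.-integrable setT (EFin \o F) ->
  Var P (fun x => F x * k) = k ^+ 2 * Var P F.
Proof.
move=> iF; have mF : measurable_fun setT F.
  exact/measurable_realfun.measurable_EFinP/(measurable_int _ iF).
have ExFk : Ex P (fun x => F x * k) = Ex P F * k.
  by rewrite mulrC -ExZl //; under eq_fun do rewrite mulrC.
rewrite /Var ExFk -ge0_ExZl ?sqr_ge0 //.
- by under eq_fun do rewrite -mulrBl exprMn mulrC.
- apply: measurable_realfun.measurable_funX.
  exact/measurable_realfun.measurable_funB/measurable_cst.
- by move=> x; exact: sqr_ge0.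
Qed.

Lemma sqrt_VarZr F k : P.-integrable setT (EFin \o F) ->
  Num.sqrt (Var P (fun x => F x * k)) = `|k| * Num.sqrt (Var P F).
Proof. by move=> iF; rewrite VarZr // sqrtrM ?sqr_ge0 // sqrtr_sqr. Qed.

End expectation.

Section product_model.
Context (R : realType) d (TC : measurableType d).
Context (mu : probability R R) (nu : probability TC R) (g : R -> R) (h : TC -> R).
Hypothesis ig : mu.-integrable setT (EFin \o g).

Let f a c := g a * h c.

Lemma I_ice_product c : I_ice mu f c = `|h c| * Num.sqrt (Var mu g).
Proof. exact: sqrt_VarZr. Qed.

Lemma I_pdp_product : nu.-integrable setT (EFin \o h) ->
  I_pdp mu nu f = `|Ex nu h| * Num.sqrt (Var mu g).
Proof.
move=> ih; rewrite /I_pdp (_ : (fun a => _) = fun a => g a * Ex nu h).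
  exact: sqrt_VarZr.
by apply: funext => a; rewrite /f ExZl.
Qed.

End product_model.

Theorem theorem2 (R : realType) (d : measure_display) (TC : measurableType d)
  (mu : probability R R) (nu : probability TC R)
  (g : R -> R) (h : TC -> R) :
  mu.-integrable setT (fun a => (g a)%:E) ->
  mu.-integrable setT (fun a => (g a ^+ 2)%:E) ->
  nu.-integrable setT (fun c => (h c)%:E) ->
  let f := fun a c => g a * h c in
  I_pdp mu nu f <= Ex nu (fun c => I_ice mu f c) /\
  ((forall c, 0 <= h c) -> Ex nu (fun c => I_ice mu f c) = I_pdp mu nu f).
Proof.
move=> ig _ ih f; set s := Num.sqrt (Var mu g).
have mh : measurable_fun setT h.
  exact/measurable_realfun.measurable_EFinP/(measurable_int _ ih).
have Ex_ice : Ex nu (fun c => I_ice mu f c) = s * Ex nu (fun c => `|h c|).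
  rewrite -ge0_ExZl ?sqrtr_ge0 //.
  - by under eq_fun do rewrite I_ice_product // mulrC.
  - exact: measurableT_comp (@measurable_realfun.normr_measurable _ _) mh.
rewrite Ex_ice I_pdp_product //; split.
  by rewrite mulrC ler_wpM2l ?sqrtr_ge0 ?le_abs_Ex.
move=> h0; under eq_fun do rewrite ger0_norm //.
by rewrite ger0_norm ?Ex_ge0 // mulrC.
Qed.
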